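(* Let $p$ be a prime, $R$ an $F$-pure ring of characteristic $p$, and $f\in R$ a non-zero non-unit. Let $d\ge1$ be an integer and $\alpha\in[0,1]$ with $(p^d-1)\alpha\in\mathbb{N}$. If the inclusion $R\cdot f^{\langle\alpha\rangle_d}\subseteq R^{1/p^d}$ splits over $R$, then the inclusion $R\cdot f^{\langle\alpha\rangle_{ed}}\subseteq R^{1/p^{ed}}$ splits over $R$ for every integer $e\ge1$.
   Context: A ring $R$ of characteristic $p$ is $F$-pure if $R\subseteq R^{1/p}$ splits as a map of $R$-modules. Roots and splitting. $R^{1/p^e}$ is the ring of formal $p^e$-th roots of elements of $R$, containing $R$ via $r\mapsto(r^{p^e})^{1/p^e}$. For $a\in\mathbb{N}$, $f^{a/p^e}:=(f^a)^{1/p^e}$. The inclusion $R\cdot t\subseteq R^{1/p^e}$ splits over $R$ if some $R$-linear $\theta:R^{1/p^e}\to R$ has $\theta(t)=1$. Truncations. For $\alpha\in(0,1]$ with non-terminating base $p$ expansion $\alpha=\sum_{e\ge1}a_e/p^e$ (digits $0\le a_e\le p-1$, not all eventually zero), $\langle\alpha\rangle_e:=\sum_{i=1}^e a_i/p^i\in\frac1{p^e}\mathbb{N}$. By convention $\langle0\rangle_e=0$. *)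

From HB Require Import structures.
From mathcomp Require Import all_boot all_order all_algebra.
From mathcomp Require Import all_classical all_reals all_analysis.
Set Implicit Arguments. Unset Strict Implicit. Unset Printing Implicit Defensive.
Import Order.TTheory GRing.Theory Num.Theory.
Import numFieldNormedType.Exports.
Local Open Scope ring_scope.
Local Open Scope classical_set_scope.

(* Model of R^{1/p^e}: the element x^{1/p^e} (x : A) is represented by x
   itself; addition/multiplication are those of A, and the R-module structure is
   r . x^{1/p^e} = (r^{p^e} x)^{1/p^e}.  An R-linear map R^{1/p^e} -> R is thus
   an additive map theta : A -> A with theta (r^{p^e} * x) = r * theta x. *)
Definition root_linear (A : comNzRingType) (p e : nat) (theta : A -> A) : Prop :=
  (forall x y, theta (x + y) = theta x + theta y) /\
  (forall r x, theta (r ^+ (p ^ e) * x) = r * theta x).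

(* The inclusion R . t ⊆ R^{1/p^e} splits, where t = x^{1/p^e}. *)
Definition splits_root (A : comNzRingType) (p e : nat) (x : A) : Prop :=
  exists theta : A -> A, @root_linear A p e theta /\ theta x = 1.

(* F-pure: the inclusion R ⊆ R^{1/p}, r |-> (r^p)^{1/p}, splits as R-modules. *)
Definition F_pure (A : comNzRingType) (p : nat) : Prop :=
  exists theta : A -> A, @root_linear A p 1 theta /\ (forall r : A, theta (r ^+ p) = r).

Definition digit_psum (R : realType) (p : nat) (a : nat -> nat) (n : nat) : R :=
  \sum_(1 <= i < n.+1) (a i)%:R / (p%:R ^+ i).

(* a (indexed from 1; a 0 is irrelevant) is the non-terminating base p
   expansion of alpha. *)
Definition nonterm_expansion (R : realType) (p : nat) (alpha : R) (a : nat -> nat) : Prop :=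
  (forall i, (a i < p)%N) /\
  (forall m, exists i, (m < i)%N /\ a i <> 0%N) /\
  ((fun n => @digit_psum R p a n) @ \oo --> alpha).

(* The digit sequence used for truncations of alpha: the non-terminating
   expansion for alpha in (0,1], and the zero sequence for alpha = 0
   (convention <0>_e = 0). *)
Definition trunc_digits (R : realType) (p : nat) (alpha : R) (a : nat -> nat) : Prop :=
  (alpha = 0 /\ forall i, a i = 0%N) \/ (0 < alpha /\ @nonterm_expansion R p alpha a).

(* p^e * <alpha>_e = sum_{i=1}^e a_i p^{e-i}, a natural number; so
   f^{<alpha>_e} = (f^(trunc_num p a e))^{1/p^e}. *)
Definition trunc_num (p : nat) (a : nat -> nat) (e : nat) : nat :=
  (\sum_(1 <= i < e.+1) a i * p ^ (e - i))%N.

From HB Require Import structures.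
From mathcomp Require Import all_boot all_order all_algebra.
From mathcomp Require Import all_classical all_reals all_analysis.
From mathcomp Require Import ring lra.
Import Order.TTheory GRing.Theory Num.Theory.
Local Open Scope ring_scope.

(* Splittings compose: if theta splits t at level d and psi splits s at level
   e, then psi \o theta splits s^{p^d} t at level e + d, because theta is
   linear over p^d-th powers.  Iterating, a splitting of f^n at level d yields
   one of f^{n(1 + p^d + ... + p^{(e-1)d})} at level ed.  On the numerical
   side, (p^d - 1) alpha = n means p^d alpha = n + alpha, so
   p^{ed} alpha = n(1 + p^d + ... + p^{(e-1)d}) + alpha; since p^m <alpha>_m is
   the unique integer N with N < p^m alpha <= N + 1, this is exactly the
   exponent p^{ed} <alpha>_{ed}. *)

Lemma geometric_sumS p d e :
  (\sum_(i < e.+1) p ^ (i * d) = (\sum_(i < e) p ^ (i * d)) * p ^ d + 1)%N.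
Proof.
rewrite big_ord_recl addnC big_distrl /=; congr (_ + _)%N.
by apply: eq_bigr => i _; rewrite /bump /= add1n mulSn expnD mulnC.
Qed.

Section RootSplitting.
Variables (A : comNzRingType) (p : nat).

Lemma root_linear_comp d e (theta psi : A -> A) :
  root_linear p d theta -> root_linear p e psi ->
  root_linear p (e + d) (psi \o theta).
Proof.
move=> [thD thM] [psD psM]; split=> [x y | r x] /=; first by rewrite thD psD.
by rewrite expnD exprM thM psM.
Qed.

Lemma splits_root0 : splits_root p 0 (1 : A).
Proof. by exists id; do 2?split=> //; move=> r x; rewrite expn0 expr1. Qed.

Lemma splits_root_mul d e (t s : A) :
  splits_root p d t -> splits_root p e s -> splits_root p (e + d) (s ^+ (p ^ d) * t).
Proof.
move=> [theta [thL th1]] [psi [psL ps1]]; exists (psi \o theta).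
split; first exact: root_linear_comp.
by case: thL => _ thM /=; rewrite thM th1 mulr1.
Qed.

Lemma splits_root_geometric d (x : A) e :
  splits_root p d x -> splits_root p (e * d) (x ^+ \sum_(i < e) p ^ (i * d)).
Proof.
move=> sx; elim: e => [|e IH]; first by rewrite big_ord0 expr0; exact: splits_root0.
by rewrite geometric_sumS exprD exprM expr1 mulSnr; apply: splits_root_mul.
Qed.

End RootSplitting.

Section DigitExpansion.
Variables (R : realType) (p : nat) (a : nat -> nat).
Hypothesis p_gt0 : (0 < p)%N.

Let pR_neq0 : (p%:R : R) != 0. Proof. by rewrite pnatr_eq0 -lt0n. Qed.

Lemma trunc_numS m : trunc_num p a m.+1 = (trunc_num p a m * p + a m.+1)%N.
Proof.
rewrite /trunc_num big_nat_recr //= subnn expn0 muln1; congr (_ + _)%N.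
rewrite big_distrl /=; apply: eq_big_nat => i /andP[_ Hi].
by rewrite -mulnA -expnSr subSn.
Qed.

Lemma digit_psumS m :
  digit_psum R p a m.+1 = digit_psum R p a m + (a m.+1)%:R / p%:R ^+ m.+1.
Proof. by rewrite /digit_psum big_nat_recr. Qed.

Lemma digit_psum_scale m : p%:R ^+ m * digit_psum R p a m = (trunc_num p a m)%:R.
Proof.
elim: m => [|m IH]; first by rewrite /digit_psum /trunc_num !big_geq // mulr0.
rewrite digit_psumS trunc_numS natrD natrM -IH mulrDr exprS -mulrA.
rewrite [_ * (_ / _)]mulrC divfK ?mulf_neq0 ?expf_neq0 //; ring.
Qed.

Lemma digit_psum_le {m k} : (m <= k)%N -> digit_psum R p a m <= digit_psum R p a k.
Proof.
elim: k => [|k IH]; first by rewrite leqn0 => /eqP->.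
rewrite leq_eqVlt => /orP[/eqP-> // | /IH le_mk].
by rewrite digit_psumS (le_trans le_mk) // lerDl divr_ge0 ?exprn_ge0.
Qed.

Lemma digit_psum_tail {m k} : (forall i, (a i < p)%N) -> (m <= k)%N ->
  digit_psum R p a k <= digit_psum R p a m + (p%:R ^+ m)^-1 - (p%:R ^+ k)^-1.
Proof.
move=> digit_lt; elim: k => [|k IH]; first by rewrite leqn0 => /eqP->; rewrite addrK.
rewrite leq_eqVlt => /orP[/eqP-> | /IH le_k]; first by rewrite addrK.
have step : (p%:R ^+ k)^-1 - (p%:R ^+ k.+1)^-1 = (p%:R - 1) / p%:R ^+ k.+1 :> R.
  by rewrite exprS; field; rewrite expf_neq0.
have : (a k.+1)%:R / p%:R ^+ k.+1 <= (p%:R ^+ k)^-1 - (p%:R ^+ k.+1)^-1 :> R.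
  rewrite step ler_wpM2r ?invr_ge0 ?exprn_ge0 //.
  by rewrite lerBrDr natr1 ler_nat.
by rewrite digit_psumS; lra.
Qed.

Lemma trunc_num_bounds (alpha : R) m : nonterm_expansion p alpha a ->
  (trunc_num p a m)%:R < p%:R ^+ m * alpha <= (trunc_num p a m)%:R + 1.
Proof.
move=> [digit_lt [nonterm cv]].
have pm_gt0 : (0 : R) < p%:R ^+ m by rewrite exprn_gt0 // ltr0n.
rewrite -digit_psum_scale; apply/andP; split.
  rewrite ltr_pM2l //; have [[|i] [lt_mi ai_neq0]] := nonterm m => //.
  have le_i_alpha : digit_psum R p a i.+1 <= alpha.
    by apply: (cvgr_to_ge cv); exists i.+1 => // k; apply: digit_psum_le.
  apply: lt_le_trans le_i_alpha; rewrite digit_psumS.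
  apply: (le_lt_trans (digit_psum_le (ltnSE lt_mi))); rewrite ltrDl.
  by rewrite divr_gt0 ?exprn_gt0 ?ltr0n // lt0n; apply/eqP.
have : alpha <= digit_psum R p a m + (p%:R ^+ m)^-1.
  apply: (cvgr_to_le cv); exists m => // k /= le_mk.
  have := digit_psum_tail digit_lt le_mk.
  have : (0 : R) <= (p%:R ^+ k)^-1 by rewrite invr_ge0 exprn_ge0.
  lra.
by move/(ler_wpM2l (ltW pm_gt0)); rewrite mulrDr mulfV ?expf_neq0.
Qed.

End DigitExpansion.

Lemma natr_lt_le_succ_uniq (R : realFieldType) (x y : nat) (z : R) :
  x%:R < z <= x%:R + 1 -> y%:R < z <= y%:R + 1 -> x = y.
Proof.
move=> /andP[lt_xz le_zx] /andP[lt_yz le_zy].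
have : (x%:R < y%:R + 1 :> R) by lra.
have : (y%:R < x%:R + 1 :> R) by lra.
by rewrite !natr1 !ltr_nat !ltnS => le_yx le_xy; apply/eqP; rewrite eqn_leq le_xy.
Qed.

Lemma periodic_scale (R : comNzRingType) p d (alpha : R) n e : (0 < p)%N ->
  (p ^ d - 1)%:R * alpha = n%:R ->
  p%:R ^+ (e * d) * alpha = (n * \sum_(i < e) p ^ (i * d))%:R + alpha.
Proof.
move=> p_gt0 period.
have period1 : p%:R ^+ d * alpha = n%:R + alpha.
  by rewrite -period natrB ?expn_gt0 ?p_gt0 // natrX; ring.
elim: e => [|e IH]; first by rewrite mul0n expr0 mul1r big_ord0 muln0 add0r.
rewrite mulSn exprD -mulrA IH geometric_sumS !(natrM, natrD, natrX) mulrDr period1.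
ring.
Qed.

Lemma trunc_num_periodic (R : realType) p d (alpha : R) n a e : (0 < p)%N ->
  0 <= alpha <= 1 -> (p ^ d - 1)%:R * alpha = n%:R ->
  trunc_digits p alpha a ->
  trunc_num p a (e * d) = (n * \sum_(i < e) p ^ (i * d))%N.
Proof.
move=> p_gt0 /andP[_ alpha_le1] period [[alpha0 a0] | [alpha_gt0 exp_alpha]].
  have -> : n = 0%N by apply/eqP; rewrite -(eqr_nat R) -period alpha0 mulr0.
  by rewrite mul0n /trunc_num big1 // => i _; rewrite a0.
apply: (@natr_lt_le_succ_uniq R _ _ (p%:R ^+ (e * d) * alpha)).
  exact: trunc_num_bounds.
by rewrite (@periodic_scale R p d alpha n e p_gt0 period); lra.
Qed.

Theorem mainTheorem8 (A : comUnitRingType) (R : realType) (p : nat) (f : A)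
  (d : nat) (alpha : R) (n : nat) (a : nat -> nat) :
  prime p -> p \in [pchar A] -> F_pure A p ->
  f != 0 -> f \isn't a GRing.unit ->
  (1 <= d)%N -> 0 <= alpha <= 1 -> (p ^ d - 1)%:R * alpha = n%:R ->
  @trunc_digits R p alpha a ->
  @splits_root A p d (f ^+ trunc_num p a d) ->
  forall e : nat, (1 <= e)%N -> @splits_root A p (e * d) (f ^+ trunc_num p a (e * d)).
Proof.
move=> p_prime _ _ _ _ _ alpha01 period digits split_d e _.
have trunc_e k :=
  @trunc_num_periodic R p d alpha n a k (prime_gt0 p_prime) alpha01 period digits.
have trunc_1 : trunc_num p a d = n.
  by rewrite -[d]mul1n trunc_e big_ord1 mul0n expn0 muln1.
by rewrite trunc_e exprM; apply: splits_root_geometric; rewrite -trunc_1.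
Qed.
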